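(* Let $R$ be a DT ring and $a\in R$ with $a^2\in\Delta(R)$. Then $a\in\Delta(R)$. In particular, every nilpotent element of $R$ lies in $\Delta(R)$.
   Context: All rings are associative with identity; $U(R)$ is the group of units. $\Delta(R)=\{x\in R: x+u\in U(R)\text{ for all }u\in U(R)\}$. $\mathrm{Tr}(R)=\{x\in R: x^3=x\}$. A ring $R$ is a DT ring if every $r\in R$ can be written $r=e+d$ with $e\in\mathrm{Tr}(R)$ and $d\in\Delta(R)$. *)

From HB Require Import structures.
From mathcomp Require Import all_boot all_order all_algebra.
Set Implicit Arguments. Unset Strict Implicit. Unset Printing Implicit Defensive.
Import GRing.Theory.
Local Open Scope ring_scope.

Definition in_Delta (R : unitRingType) (x : R) : Prop :=
  forall u : R, u \is a GRing.unit -> (x + u) \is a GRing.unit.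

Definition tripotent (R : unitRingType) (x : R) : Prop := x ^+ 3 = x.

Definition DT_ring (R : unitRingType) : Prop :=
  forall r : R, exists e d : R, tripotent e /\ in_Delta d /\ r = e + d.

(* If a^2 is in Delta then 1 - a^2 = (1 + a)(1 - a) is a unit, so 1 + a is a
   unit, and a x = (1 + a) x - x shows that Delta is stable under
   multiplication by a on either side.  Writing a = t + d with t tripotent and
   d in Delta, t^2 = a^2 - a d - d a + d^2 is then in Delta, so 1 - t^2 is a
   unit; since t (1 - t^2) = 0 this forces t = 0, i.e. a = d.  A nilpotent
   element has some power a^(2^k) = 0, and the first part applied k times
   gives a in Delta. *)
From mathcomp Require Import all_boot all_order all_algebra.
Local Open Scope ring_scope.
Import GRing.Theory.

Set Implicit Arguments.
Unset Strict Implicit.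

Section Delta.
Variable R : unitRingType.
Implicit Types x y u a t : R.

Lemma in_Delta0 : in_Delta (0 : R).
Proof. by move=> u Uu; rewrite add0r. Qed.

Lemma in_DeltaD x y : in_Delta x -> in_Delta y -> in_Delta (x + y).
Proof. by move=> Dx Dy u Uu; rewrite -addrA; apply/Dx/Dy. Qed.

Lemma in_DeltaN x : in_Delta x -> in_Delta (- x).
Proof.
move=> Dx u Uu; rewrite -unitrN opprD opprK.
by apply: Dx; rewrite unitrN.
Qed.

Lemma in_DeltaB x y : in_Delta x -> in_Delta y -> in_Delta (x - y).
Proof. by move=> Dx Dy; apply/in_DeltaD/in_DeltaN. Qed.

Lemma in_DeltaMl u x : u \is a GRing.unit -> in_Delta x -> in_Delta (u * x).
Proof.
move=> Uu Dx v Uv.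
have -> : u * x + v = u * (x + u^-1 * v) by rewrite mulrDr mulVKr.
by rewrite unitrMl // Dx // unitrMl ?unitrV.
Qed.

Lemma in_DeltaMr u x : u \is a GRing.unit -> in_Delta x -> in_Delta (x * u).
Proof.
move=> Uu Dx v Uv.
have -> : x * u + v = (x + v / u) * u by rewrite mulrDl divrK.
by rewrite unitrMr // Dx // unitrMr ?unitrV.
Qed.

Lemma unit_add1_Delta x : in_Delta x -> (1 + x) \is a GRing.unit.
Proof. by move=> Dx; rewrite addrC; apply: Dx; apply: unitr1. Qed.

Lemma unit_sub1_Delta x : in_Delta x -> (1 - x) \is a GRing.unit.
Proof. by move/in_DeltaN/unit_add1_Delta. Qed.

Lemma in_Delta_mull a x :
  (1 + a) \is a GRing.unit -> in_Delta x -> in_Delta (a * x).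
Proof.
move=> Ua Dx.
have -> : a * x = (1 + a) * x - x by
  rewrite mulrDl mul1r addrAC subrr add0r.
exact/in_DeltaB/Dx/in_DeltaMl.
Qed.

Lemma in_Delta_mulr a x :
  (1 + a) \is a GRing.unit -> in_Delta x -> in_Delta (x * a).
Proof.
move=> Ua Dx.
have -> : x * a = x * (1 + a) - x by
  rewrite mulrDr mulr1 addrAC subrr add0r.
exact/in_DeltaB/Dx/in_DeltaMr.
Qed.

Lemma in_DeltaM x y : in_Delta x -> in_Delta y -> in_Delta (x * y).
Proof. by move=> Dx; apply/in_Delta_mull/unit_add1_Delta. Qed.

Lemma unit_add1_of_unit_sub1_sqr a :
  (1 - a ^+ 2) \is a GRing.unit -> (1 + a) \is a GRing.unit.
Proof.
have fact_l : (1 + a) * (1 - a) = 1 - a ^+ 2.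
  by rewrite mulrDl mul1r mulrBr mulr1 expr2 addrA subrK.
have fact_r : (1 - a) * (1 + a) = 1 - a ^+ 2.
  by rewrite mulrDr mulr1 mulrBl mul1r expr2 addrA subrK.
rewrite -fact_l unitrM_comm; first by case/andP.
by rewrite /GRing.comm fact_l fact_r.
Qed.

Lemma tripotent_Delta_sqr_eq0 t : tripotent t -> in_Delta (t ^+ 2) -> t = 0.
Proof.
move=> Tt /unit_sub1_Delta U.
have t_ann : t * (1 - t ^+ 2) = 0 by rewrite mulrBr mulr1 -exprS Tt subrr.
by rewrite -[t](mulrK U) t_ann mul0r.
Qed.

Lemma DT_in_Delta_of_sqr a : DT_ring R -> in_Delta (a ^+ 2) -> in_Delta a.
Proof.
move=> DT Da2.
have Ua := unit_add1_of_unit_sub1_sqr (unit_sub1_Delta Da2).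
have [t [d [Tt [Dd a_eq]]]] := DT a.
have t_sqr : t ^+ 2 = a ^+ 2 - a * d - d * a + d * d.
  have -> : t = a - d by rewrite a_eq addrK.
  by rewrite expr2 mulrBl !mulrBr -expr2 opprD opprK addrA.
suff t0 : t = 0 by rewrite a_eq t0 add0r.
apply: tripotent_Delta_sqr_eq0 => //; rewrite t_sqr.
apply/in_DeltaD/(in_DeltaM Dd Dd)/in_DeltaB/(in_Delta_mulr Ua Dd).
exact/in_DeltaB/(in_Delta_mull Ua Dd).
Qed.

Lemma DT_in_Delta_of_exp2 k a :
  DT_ring R -> in_Delta (a ^+ (2 ^ k)) -> in_Delta a.
Proof.
move=> DT; elim: k a => [|k IHk] a Da; first by rewrite expn0 expr1 in Da.
by apply/DT_in_Delta_of_sqr/IHk; rewrite // -exprM -expnS.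
Qed.

Lemma DT_in_Delta_nilpotent a n :
  DT_ring R -> a ^+ n = 0 -> in_Delta a.
Proof.
move=> DT an0; apply: (@DT_in_Delta_of_exp2 n _ DT).
have le_n_2n : (n <= 2 ^ n)%N by rewrite ltnW // ltn_expl.
by rewrite -(subnK le_n_2n) exprD an0 mulr0; apply: in_Delta0.
Qed.

End Delta.

Theorem lemma2p4 (R : unitRingType) (hR : DT_ring R) :
  (forall a : R, in_Delta (a ^+ 2) -> in_Delta a) /\
  (forall a : R, (exists n : nat, a ^+ n = 0) -> in_Delta a).
Proof.
split=> a; first exact: DT_in_Delta_of_sqr.
by case=> n; apply: DT_in_Delta_nilpotent.
Qed.
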